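(* Let $\lambda=(\lambda_1,\ldots,\lambda_n)\in\mathbb{C}^n$ have strictly negative real parts and let $C_\lambda$ be the associated real companion matrix. Let $D\in\mathbb{R}^{r\times nm}$ be such that the pair $(C_\lambda\otimes I_{m\times m},D)$ is observable, and let $P\in\mathbb{R}^{nm\times nm}$ be the unique symmetric positive definite solution of $$(C_\lambda\otimes I_{m\times m})^{T}P+P(C_\lambda\otimes I_{m\times m})+D^{T}D=0.$$ Let $x(t)\in\mathbb{R}^m$ solve $x^{(n)}=-\sum_{k=0}^{n-1}\kappa_{k,\lambda}x^{(k)}$ from the initial state $z_0=(x_0^{(0)},\ldots,x_0^{(n-1)})$, viewed as a vector in $\mathbb{R}^{nm}$ by stacking $x_0^{(0)},\ldots,x_0^{(n-1)}$. Then for all $t\ge 0$, $$x(t)\in\mathcal{E}\big(0,\ I_{m\times nm}P^{-1}I_{nm\times m},\ \|z_0\|_P\big).$$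
   Context: The coefficients $\kappa_{k,\lambda}\in\mathbb{R}$ are defined by $\prod_{i=1}^n(s-\lambda_i)=s^n+\sum_{k=0}^{n-1}\kappa_{k,\lambda}s^k$. $C_\lambda$ is the $n\times n$ matrix with $(C_\lambda)_{i,i+1}=1$ for $i=1,\ldots,n-1$, last row $[-\kappa_{0,\lambda},\ldots,-\kappa_{n-1,\lambda}]$, zeros elsewhere; with the stacked state $z=(x^{(0)},\ldots,x^{(n-1)})\in\mathbb{R}^{nm}$ the system reads $\dot z=(C_\lambda\otimes I_{m\times m})z$. $\otimes$ is the Kronecker product; $I_{m\times nm}=[I_m\ 0\ \cdots\ 0]$ and $I_{nm\times m}=I_{m\times nm}^T$. $\|z\|_P=\sqrt{z^TPz}$. For $c\in\mathbb{R}^m$, a symmetric positive semidefinite $\Sigma$ and $\rho\ge 0$, $\mathcal{E}(c,\Sigma,\rho)=\{c+\rho\,\Sigma^{1/2}u: u\in\mathbb{R}^m,\ \|u\|\le 1\}$ with $\Sigma^{1/2}$ the symmetric positive semidefinite square root. *)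

From HB Require Import structures.
From mathcomp Require Import all_boot all_order all_algebra.
From mathcomp Require Import all_classical all_reals all_analysis.
From mathcomp Require Import complex.
Set Implicit Arguments. Unset Strict Implicit. Unset Printing Implicit Defensive.
Import Order.TTheory GRing.Theory Num.Theory.
Local Open Scope ring_scope.

Lemma div_ord_proof (p q : nat) (i : 'I_(p * q)) : (i %/ q < p)%N.
Proof.
have := ltn_ord i; move: (nat_of_ord i) => {}i; case: q => [|q]; first by rewrite muln0 ltn0.
by move=> h; rewrite ltn_divLR.
Qed.
Definition div_ord (p q : nat) (i : 'I_(p * q)) : 'I_p := Ordinal (div_ord_proof i).

Lemma mod_ord_proof (p q : nat) (i : 'I_(p * q)) : (i %% q < q)%N.
Proof.
have := ltn_ord i; move: (nat_of_ord i) => {}i; case: q => [|q]; first by rewrite muln0 ltn0.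
by move=> _; rewrite ltn_mod.
Qed.
Definition mod_ord (p q : nat) (i : 'I_(p * q)) : 'I_q := Ordinal (mod_ord_proof i).

Lemma stack_idx_proof (n m : nat) (k : 'I_n) (j : 'I_m) : (k * m + j < n * m)%N.
Proof.
have hk := ltn_ord k; have hj := ltn_ord j.
apply: (@leq_trans (k * m + m)); first by rewrite ltn_add2l.
by rewrite -[X in (_ + X <= _)%N]mul1n -mulnDl addn1 leq_mul2r hk orbT.
Qed.
(* the position of component j of block k in the stacked vector (x^(0),...,x^(n-1)) *)
Definition stack_idx (n m : nat) (k : 'I_n) (j : 'I_m) : 'I_(n * m) :=
  Ordinal (stack_idx_proof k j).

Definition kron (R : pzRingType) (p q r s : nat) (A : 'M[R]_(p, q)) (B : 'M[R]_(r, s))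
  : 'M[R]_(p * r, q * s) :=
  \matrix_(i, j) (A (div_ord i) (div_ord j) * B (mod_ord i) (mod_ord j)).

Definition lam_poly (R : rcfType) (n : nat) (lam : 'I_n -> R[i]) : {poly R[i]} :=
  \prod_(i < n) ('X - (lam i)%:P).

Definition kappa (R : rcfType) (n : nat) (lam : 'I_n -> R[i]) (k : nat) : R :=
  complex.Re ((lam_poly lam)`_k).

Definition companion (R : rcfType) (n : nat) (lam : 'I_n -> R[i]) : 'M[R]_n :=
  \matrix_(i, j) (if i.+1 == n then - kappa lam j else ((j : nat) == i.+1)%:R).

Definition Isel (R : pzRingType) (m n : nat) : 'M[R]_(m, n * m) :=
  \matrix_(i, j) ((j : nat) == i)%:R.

(* observability of the pair (A, D): the only state producing zero output
   D A^k v = 0 for all k < N (i.e. the kernel of the observability matrix) is 0 *)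
Definition observable (R : pzRingType) (N r : nat) (A : 'M[R]_N) (D : 'M[R]_(r, N)) :=
  forall v : 'cV[R]_N, (forall k, (k < N)%N -> D *m (A ^+ k) *m v = 0) -> v = 0.

Definition posdef (R : numDomainType) (N : nat) (P : 'M[R]_N) :=
  forall v : 'cV[R]_N, v != 0 -> 0 < (v^T *m P *m v) 0 0.

Definition psd (R : numDomainType) (N : nat) (P : 'M[R]_N) :=
  forall v : 'cV[R]_N, 0 <= (v^T *m P *m v) 0 0.

Definition Pnorm (R : rcfType) (N : nat) (P : 'M[R]_N) (z : 'cV[R]_N) : R :=
  Num.sqrt ((z^T *m P *m z) 0 0).

Definition ellipsoid (R : rcfType) (m : nat) (c : 'cV[R]_m) (Sigma : 'M[R]_m) (rho : R)
  : set 'cV[R]_m :=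
  [set x | exists S : 'M[R]_m, [/\ S^T = S, psd S, S *m S = Sigma &
           exists u : 'cV[R]_m, (u^T *m u) 0 0 <= 1 /\ x = c + rho *: (S *m u)]].

From HB Require Import structures.
From mathcomp Require Import all_boot all_order all_algebra.
From mathcomp Require Import all_classical all_reals all_analysis.
From mathcomp Require Import complex ring.
Set Implicit Arguments. Unset Strict Implicit. Unset Printing Implicit Defensive.
Import Order.TTheory GRing.Theory Num.Theory.
Local Open Scope ring_scope.

(** Stacking [x] and its first [n - 1] derivatives gives a trajectory [z] of
    [z' = A z] with [A = C_lambda (x) I_m], and [x(t) = I z(t)] for the selector
    [I = I_{m x nm}].  By the Lyapunov equation, [V(z) = z^T P z] has derivative
    [-|D z|^2 <= 0], so [z(t)^T P z(t) <= |z0|_P^2] for [t >= 0].  Since [I] has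
    full row rank, [Sigma = I P^-1 I^T] is invertible; with [Sigma w = I z],
    completing the square gives [w^T Sigma w <= z^T P z], so
    [I z = Sigma w = rho Sigma^(1/2) u] with [u = rho^-1 Sigma^(1/2) w] a unit-ball
    vector.  The square root [Sigma^(1/2)] is obtained as a real polynomial in
    [Sigma], via the spectral theorem for its complexification.
    The hypotheses on [lambda] and the observability of [(A, D)] only ensure,
    in the paper, that [P] exists. *)

Section PositiveDefinite.
Variables (R : numFieldType) (N : nat).
Implicit Types (P Q : 'M[R]_N).

Lemma posdef_psd P : posdef P -> psd P.
Proof. by move=> pP v; have [->|/pP/ltW//] := eqVneq v 0; rewrite mulmx0 mxE. Qed.

Lemma posdef_unitmx P : posdef P -> P \in unitmx.
Proof.
move=> pP; rewrite -row_free_unit; apply: inj_row_free => v vP0.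
apply/eqP/negPn/negP; rewrite -trmx_eq0 => /pP.
by rewrite trmxK vP0 mul0mx mxE ltxx.
Qed.

Lemma posdef_invmx P : P^T = P -> posdef P -> posdef (invmx P).
Proof.
move=> sP pP y y0; have Pu := posdef_unitmx pP.
have -> : y^T *m invmx P *m y = (invmx P *m y)^T *m P *m (invmx P *m y).
  by rewrite trmx_mul trmx_inv sP -!mulmxA (mulKVmx Pu).
by apply: pP; apply: contra y0 => /eqP Py0; rewrite -(mulKVmx Pu y) Py0 mulmx0.
Qed.

Lemma psd_congr m (I : 'M[R]_(m, N)) Q : psd Q -> psd (I *m Q *m I^T).
Proof. by move=> pQ v; have := pQ (I^T *m v); rewrite trmx_mul trmxK !mulmxA. Qed.

Lemma posdef_congr m (I : 'M[R]_(m, N)) Q :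
  row_free I -> posdef Q -> posdef (I *m Q *m I^T).
Proof.
move=> fI pQ v v0; have := pQ (I^T *m v); rewrite trmx_mul trmxK !mulmxA; apply.
rewrite -trmx_eq0 trmx_mul trmxK; apply: contra v0 => /eqP vI0.
by rewrite -trmx_eq0; apply/eqP/(row_free_inj fI); rewrite /= vI0 mul0mx.
Qed.

(* The left side is the least value of [z^T P z] among the [z] with the same
   [I z]; it is attained at [q = P^-1 I^T w], and [(z - q)^T P (z - q) >= 0]
   expands to the inequality. *)
Lemma quad_range_le m P (I : 'M[R]_(m, N)) (z : 'cV_N) (w : 'cV_m) :
  P^T = P -> posdef P -> I *m invmx P *m I^T *m w = I *m z ->
  (w^T *m (I *m z)) 0 0 <= (z^T *m P *m z) 0 0.
Proof.
move=> sP pP wE; have Pu := posdef_unitmx pP.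
set q := invmx P *m I^T *m w.
have Pq : P *m q = I^T *m w by rewrite /q -mulmxA (mulKVmx Pu).
have Iq : I *m q = I *m z by rewrite /q !mulmxA.
clearbody q.
have uPq u : \tr (u^T *m P *m q) = \tr (w^T *m (I *m u)).
  by rewrite -mxtrace_tr -mulmxA Pq !trmx_mul !trmxK mulmxA.
have qPu u : \tr (q^T *m P *m u) = \tr (u^T *m P *m q).
  by rewrite -mxtrace_tr !trmx_mul trmxK sP mulmxA.
have := posdef_psd pP (z - q).
rewrite -!trace_mx11 [(z - q)^T]linearB /= !mulmxBl !mulmxBr !linearB /= qPu !uPq Iq.
by rewrite subrr subr0 subr_ge0.
Qed.

End PositiveDefinite.

Lemma poly_interpolation (F : fieldType) (f : F -> F) (s : seq F) :
  exists p : {poly F}, {in s, forall x, p.[x] = f x}.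
Proof.
elim: s => [|a s [p hp]]; first by exists 0.
have [as_|an_s] := boolP (a \in s).
  by exists p => x; rewrite inE => /predU1P[->|]; apply: hp.
pose q := \prod_(b <- s) ('X - b%:P).
have qa : q.[a] != 0 by rewrite -/(root q a) root_prod_XsubC.
exists (p + ((f a - p.[a]) / q.[a]) *: q) => x; rewrite inE hornerD hornerZ.
case/predU1P => [->|xs]; first by rewrite divfK // addrC subrK.
have /eqP-> : root q x by rewrite root_prod_XsubC.
by rewrite mulr0 addr0 hp.
Qed.

Lemma trmx_horner_mx (R : comNzRingType) n (A : 'M[R]_n.+1) p :
  (horner_mx A p)^T = horner_mx A^T p.
Proof.
elim/poly_ind: p => [|p c IH]; first by rewrite !rmorph0 trmx0.
rewrite !rmorphD !rmorphM /= !horner_mx_X !horner_mx_C linearD /= tr_scalar_mx.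
rewrite -!mulmxE trmx_mul IH; congr (_ + _).
exact: (@comm_mx_horner _ _ A^T A^T p (erefl _)).
Qed.

Section PsdSqrt.
Variable R : rcfType.
Local Notation toC := (real_complex R).
Local Open Scope sesquilinear_scope.

Lemma map_complex_normalmx n (A : 'M[R]_n) : A^T = A -> map_mx toC A \is normalmx.
Proof.
move=> sA; apply/normalmxP.
suff -> : (map_mx toC A)^t* = map_mx toC A by [].
by apply/matrixP => i j; rewrite !mxE -[in RHS]sA mxE; exact: conjc_real.
Qed.

Lemma psd_map_complex n (A : 'M[R]_n) : A^T = A -> psd A ->
  forall u : 'rV[R[i]]_n, 0 <= (u *m map_mx toC A *m u ^t*) 0 0.
Proof.
move=> sA pA u.
set X := map_mx toC (map_mx (@complex.Re R) u).
set Y := map_mx toC (map_mx (@complex.Im R) u).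
have uE : u = X + 'i%C *: Y.
  apply/matrixP => i j; rewrite !mxE; case: (u i j) => a b /=.
  by apply/eqP; rewrite eq_complex /= ?(mul0r, mulr0, mul1r, subr0, addr0, add0r) !eqxx.
have uCE : u ^t* = X^T - 'i%C *: Y^T.
  apply/matrixP => i j; rewrite !mxE; case: (u j i) => a b /=.
  by apply/eqP; rewrite eq_complex /= ?(mul0r, mulr0, mul1r, subr0, addr0, add0r, sub0r, oppr0) !eqxx.
set M := map_mx toC A.
have YMX : (Y *m M *m X^T) 0 0 = (X *m M *m Y^T) 0 0.
  by rewrite -[LHS]trace_mx11 -mxtrace_tr !trmx_mul trmxK /M map_trmx sA mulmxA trace_mx11.
have cplx_psd (c : 'rV_n) : 0 <= (map_mx toC c *m M *m (map_mx toC c)^T) 0 0.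
  by rewrite map_trmx -!map_mxM mxE ler0c; have := pA c^T; rewrite trmxK.
rewrite uCE {1}uE !mulmxDl !mulmxBr -!scalemxAl -!scalemxAr.
move: YMX (cplx_psd (map_mx (@complex.Re R) u)) (cplx_psd (map_mx (@complex.Im R) u)).
rewrite -/X -/Y !mxE => -> XMX YMY.
rewrite addrA subrK mulrA -expr2 complex.sqr_i mulN1r opprK.
exact: addr_ge0.
Qed.

Lemma psd_spectral_diag_ge0 n (A : 'M[R]_n) : A^T = A -> psd A ->
  forall i, 0 <= spectral_diag (map_mx toC A) 0 i.
Proof.
move=> sA pA i; set M := map_mx toC A; set U := spectralmx M.
have /orthomx_spectralP ME := map_complex_normalmx sA; rewrite -/M -/U in ME.
have UV : invmx U = U^t* by rewrite invmx_unitary ?spectral_unitarymx.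
have diagE : diag_mx (spectral_diag M) = U *m M *m U^t*.
  by rewrite -UV [in RHS]ME !mulmxA mulmxV ?spectral_unit // mul1mx mulmxK ?spectral_unit.
have := psd_map_complex sA pA (row i U).
suff -> : (row i U *m M *m (row i U)^t*) 0 0 = spectral_diag M 0 i by [].
transitivity (diag_mx (spectral_diag M) i i); last by rewrite mxE eqxx mulr1n.
rewrite diagE !mxE.
by apply: eq_bigr => k _; rewrite !mxE; congr (_ * _); apply: eq_bigr => l _; rewrite !mxE.
Qed.

Lemma psd_unitary_diag n (S : 'M[R]_n) (U : 'M[R[i]]_n) (s : 'rV[R[i]]_n) :
  U \is unitarymx -> (forall i, 0 <= s 0 i) ->
  map_mx toC S = invmx U *m diag_mx s *m U -> psd S.
Proof.
move=> Uu s_ge0 SE v; rewrite -ler0c.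
have -> : toC ((v^T *m S *m v) 0 0) = ((map_mx toC v)^T *m map_mx toC S *m map_mx toC v) 0 0.
  by rewrite map_trmx -!map_mxM [RHS]mxE.
set w := U *m map_mx toC v.
have vUE : (map_mx toC v)^T *m invmx U = w^t*.
  rewrite invmx_unitary //; apply/matrixP => i j; rewrite !mxE rmorph_sum.
  by apply: eq_bigr => k _; rewrite !mxE rmorphM mulrC; congr (_ * _); exact/esym/conjc_real.
rewrite SE !mulmxA vUE -mulmxA mxE; apply: sumr_ge0 => k _.
rewrite mul_mx_diag mxE mulrAC; apply: mulr_ge0 => //.
by rewrite mxE mulrC [w^T 0 k]mxE; exact: mul_conjC_ge0.
Qed.

Lemma psd_sqrtmx n (A : 'M[R]_n) : A^T = A -> psd A ->
  exists S : 'M[R]_n, [/\ S^T = S, psd S & S *m S = A].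
Proof.
case: n A => [|n] A sA pA.
  exists 0; split => [|v|]; first exact: trmx0.
    by rewrite mulmx0 mul0mx mxE.
  by rewrite [A]thinmx0 [0 *m 0]thinmx0.
set M := map_mx toC A; set U := spectralmx M; set d := spectral_diag M.
have /orthomx_spectralP ME := map_complex_normalmx sA; rewrite -/M -/U -/d in ME.
have Uu : U \in unitmx := spectral_unit M.
have dE i : d 0 i = toC (complex.Re (d 0 i)) /\ 0 <= complex.Re (d 0 i).
  have := psd_spectral_diag_ge0 sA pA i; rewrite -/d complex.lecE /=.
  by case: (d 0 i) => a b /= /andP[/eqP-> ->].
(* [S] is the real polynomial in [A] that interpolates [sqrt] on the spectrum. *)
have [p pE] := poly_interpolation Num.sqrt [seq complex.Re (d 0 i) | i <- enum 'I_n.+1].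
set S := horner_mx A p.
set s := map_mx toC (\row_i Num.sqrt (complex.Re (d 0 i))).
have SE : map_mx toC S = invmx U *m diag_mx s *m U.
  rewrite map_horner_mx -/M {1}ME horner_mx_uconjC; last exact: Uu.
  rewrite horner_mx_diag; congr (_ *m diag_mx _ *m _).
  apply/matrixP => k j; rewrite !mxE ord1 (proj1 (dE j)) horner_map /= pE //.
  by apply: map_f; rewrite mem_enum.
exists S; split.
- by rewrite trmx_horner_mx sA.
- apply: (psd_unitary_diag (spectral_unitarymx M) _ SE) => i.
  by rewrite !mxE ler0c sqrtr_ge0.
- apply: (map_mx_inj (f := toC)); rewrite map_mxM SE -/M [RHS]ME.
  rewrite !mulmxA (mulmxK Uu) -!mulmxA; congr (_ *m _); rewrite !mulmxA; congr (_ *m _).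
  rewrite mul_diag_mx; apply/matrixP => i j; rewrite !mxE.
  have [->|_] := eqVneq i j; last by rewrite !mulr0n mulr0.
  have [-> d_ge0] := dE j.
  by rewrite !mulr1n -rmorphM -expr2 sqr_sqrtr.
Qed.

End PsdSqrt.

Section Ellipsoid.
Variables (R : rcfType) (m : nat) (Sigma : 'M[R]_m).
Hypotheses (Sigma_sym : Sigma^T = Sigma) (Sigma_psd : psd Sigma).

Lemma mem_ellipsoid0 rho : 0 \in ellipsoid 0 Sigma rho.
Proof.
have [S [S_sym S_psd SS]] := psd_sqrtmx Sigma_sym Sigma_psd.
apply/mem_set; exists S; split => //; exists 0.
by rewrite trmx0 mul0mx mxE ler01 mulmx0 scaler0 addr0.
Qed.

Lemma mem_ellipsoid_mul (w : 'cV_m) rho : 0 < rho ->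
  (w^T *m Sigma *m w) 0 0 <= rho ^+ 2 -> Sigma *m w \in ellipsoid 0 Sigma rho.
Proof.
move=> rho_gt0 w_le; have [S [S_sym S_psd SS]] := psd_sqrtmx Sigma_sym Sigma_psd.
apply/mem_set; exists S; split => //; exists (rho^-1 *: (S *m w)); split.
  rewrite [(_ *: _)^T]linearZ /= trmx_mul S_sym -scalemxAl -scalemxAr scalerA mxE.
  rewrite -mulmxA (mulmxA S) SS mulmxA -expr2 exprVn ler_pdivrMl ?exprn_gt0 //.
  by rewrite mulr1.
by rewrite add0r scalemxAr scalerA mulfV ?gt_eqF // scale1r mulmxA SS.
Qed.

End Ellipsoid.

Lemma mem_ellipsoid_quad (R : rcfType) m N (P : 'M[R]_N) (I : 'M[R]_(m, N))
    (z : 'cV[R]_N) (rho : R) :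
  P^T = P -> posdef P -> 0 <= rho -> (z^T *m P *m z) 0 0 <= rho ^+ 2 ->
  (exists w, I *m invmx P *m I^T *m w = I *m z) ->
  I *m z \in ellipsoid 0 (I *m invmx P *m I^T) rho.
Proof.
move=> sP pP rho_ge0 z_le [w wE].
have Sigma_sym : (I *m invmx P *m I^T)^T = I *m invmx P *m I^T.
  by rewrite !trmx_mul trmxK trmx_inv sP mulmxA.
have Sigma_psd := psd_congr I (posdef_psd (posdef_invmx sP pP)).
have [rho0|rho_neq0] := eqVneq rho 0.
  have -> : z = 0.
    apply/eqP; apply: contraTT z_le => /pP z_gt0.
    by rewrite rho0 expr0n /= -ltNge.
  by rewrite mulmx0; apply: mem_ellipsoid0.
rewrite -wE; apply: mem_ellipsoid_mul => //; first by rewrite lt_neqAle eq_sym rho_neq0.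
by rewrite -mulmxA wE; apply: le_trans z_le; apply: quad_range_le.
Qed.

Lemma stack_idx_div_mod n m (l : 'I_(n * m)) : stack_idx (div_ord l) (mod_ord l) = l.
Proof. by apply: val_inj => /=; rewrite -divn_eq. Qed.

Lemma div_ord_stack n m (k : 'I_n) (j : 'I_m) : div_ord (stack_idx k j) = k.
Proof.
apply: val_inj => /=; have m_gt0 : (0 < m)%N by apply: leq_ltn_trans (ltn_ord j).
by rewrite divnMDl // divn_small ?addn0.
Qed.

Lemma mod_ord_stack n m (k : 'I_n) (j : 'I_m) : mod_ord (stack_idx k j) = j.
Proof. by apply: val_inj => /=; rewrite modnMDl modn_small. Qed.

Lemma big_stack_idx (V : nmodType) n m (G : 'I_(n * m) -> V) :
  \sum_l G l = \sum_(k < n) \sum_(j < m) G (stack_idx k j).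
Proof.
rewrite pair_big /= (reindex (fun p : 'I_n * 'I_m => stack_idx p.1 p.2)) //=.
exists (fun l => (div_ord l, mod_ord l)) => [[k j] _ | l _] /=.
  by rewrite div_ord_stack mod_ord_stack.
by rewrite stack_idx_div_mod.
Qed.

Lemma mul_kron_mx1 (R : pzRingType) n m (A : 'M[R]_n) (v : 'cV[R]_(n * m)) k j :
  (kron A 1%:M *m v) (stack_idx k j) 0 = \sum_k' A k k' * v (stack_idx k' j) 0.
Proof.
rewrite mxE big_stack_idx; apply: eq_bigr => k' _.
rewrite (bigD1 j) //= big1 ?addr0 => [|j' j'j]; rewrite !mxE !div_ord_stack !mod_ord_stack.
  by rewrite eqxx mulr1.
by rewrite eq_sym (negPf j'j) mulr0 mul0r.
Qed.

Lemma Isel_mulE (R : pzRingType) m n p (B : 'M[R]_(n.+1 * m, p)) i j :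
  (Isel R m n.+1 *m B) i j = B (stack_idx ord0 i) j.
Proof.
rewrite mxE (bigD1 (stack_idx ord0 i)) //= big1 ?addr0 => [|l li].
  by rewrite mxE /= mul0n add0n eqxx mul1r.
rewrite mxE; case: eqP => [l_i|]; last by rewrite mul0r.
by case/eqP: li; apply: val_inj; rewrite /= mul0n add0n.
Qed.

Lemma Isel_row_free (R : fieldType) m n : row_free (Isel R m n.+1).
Proof.
apply: inj_row_free => v vI0.
have I_trK : Isel R m n.+1 *m (Isel R m n.+1)^T = 1%:M.
  by apply/matrixP => i j; rewrite Isel_mulE !mxE /= mul0n add0n.
by rewrite -[v]mulmx1 -I_trK mulmxA vI0 mul0mx.
Qed.

Lemma Isel_range (R : numFieldType) m n (P : 'M[R]_(n * m)) (z : 'cV[R]_(n * m)) :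
  P^T = P -> posdef P ->
  exists w, Isel R m n *m invmx P *m (Isel R m n)^T *m w = Isel R m n *m z.
Proof.
case: n P z => [|n] P z sP pP.
  by exists 0; rewrite mulmx0 [Isel R m 0]thinmx0 mul0mx.
have Sigma_pd := posdef_congr (Isel_row_free R m n) (posdef_invmx sP pP).
by exists (invmx (Isel R m n.+1 *m invmx P *m (Isel R m n.+1)^T) *m (Isel R m n.+1 *m z));
  rewrite mulKVmx // posdef_unitmx.
Qed.

Lemma companion_mul (R : rcfType) n (lam : 'I_n -> R[i]) (g : nat -> R) (k : 'I_n) :
  g n = - \sum_(k' < n) kappa lam k' * g k' ->
  \sum_k' companion lam k k' * g k' = g k.+1.
Proof.
move=> gn; under eq_bigr => k' _ do rewrite mxE.
have [kn|kn] := eqVneq k.+1 n.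
  by under eq_bigr => k' _ do rewrite mulNr; rewrite sumrN -gn kn.
have k1_lt : (k.+1 < n)%N by rewrite ltn_neqAle kn ltn_ord.
rewrite (bigD1 (Ordinal k1_lt)) //= eqxx mul1r big1 ?addr0 // => k' k'k.
by rewrite (_ : _ == _ = false) ?mul0r //; apply: contraNF k'k => /eqP k'E; apply/eqP/val_inj.
Qed.

Definition stacked_derivs (R : realType) n m (x : 'I_m -> R -> R) (l : 'I_(n * m)) : R -> R :=
  derive1n (div_ord l) (x (mod_ord l)).

Lemma stacked_derivs_ode (R : realType) n m (lam : 'I_n -> R[i]) (x : 'I_m -> R -> R) :
  (forall j t, derive1n n (x j) t = - \sum_(k < n) kappa lam k * derive1n k (x j) t) ->
  forall l t, 'D_1 (stacked_derivs x l) t =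
    (kron (companion lam) 1%:M *m \col_l' stacked_derivs x l' t) l 0.
Proof.
move=> ode l t; rewrite -(stack_idx_div_mod l) mul_kron_mx1.
move: (div_ord l) (mod_ord l) => k j.
rewrite {1}/stacked_derivs div_ord_stack mod_ord_stack -derive1E -derive1nS.
rewrite -(@companion_mul _ _ lam (fun k => derive1n k (x j) t) k (ode j t)).
apply: eq_bigr => k' _; congr (_ * _).
by rewrite mxE /stacked_derivs div_ord_stack mod_ord_stack.
Qed.

Lemma col_Isel_stacked (R : realType) n m (lam : 'I_n -> R[i]) (x : 'I_m -> R -> R) t :
  (forall j t, derive1n n (x j) t = - \sum_(k < n) kappa lam k * derive1n k (x j) t) ->
  \col_j x j t = Isel R m n *m \col_l stacked_derivs x l t.
Proof.
case: n lam => [|n] lam ode.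
  rewrite [Isel R m 0]thinmx0 mul0mx; apply/matrixP => j i.
  by rewrite !mxE -[x j t]/(derive1n 0 (x j) t) ode big_ord0 oppr0.
apply/matrixP => j i; rewrite ord1 Isel_mulE !mxE /stacked_derivs.
by rewrite div_ord_stack mod_ord_stack.
Qed.

Lemma quad_formE (R : comPzRingType) N (P : 'M[R]_N) (u v : 'cV[R]_N) :
  (u^T *m P *m v) 0 0 = \sum_i \sum_j u i 0 * P i j * v j 0.
Proof.
rewrite mxE exchange_big /=; apply: eq_bigr => j _; rewrite mxE mulr_suml.
by apply: eq_bigr => i _; rewrite mxE.
Qed.

Section Lyapunov.
Variables (R : realType) (N : nat) (P : 'M[R]_N) (f : 'I_N -> R -> R).
Hypothesis f_derivable : forall i t, derivable (f i) t 1.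

Lemma is_derive_quad_form (t : R) :
  is_derive t (1 : R) (fun s => ((\col_l f l s)^T *m P *m \col_l f l s) 0 0)
    (((\col_l f l t)^T *m P *m \col_l 'D_1 (f l) t) 0 0 +
     ((\col_l 'D_1 (f l) t)^T *m P *m \col_l f l t) 0 0).
Proof.
have -> : (fun s => ((\col_l f l s)^T *m P *m \col_l f l s) 0 0) =
    \sum_i \sum_j P i j *: (f i * f j).
  apply/funext => s; rewrite quad_formE fct_sumE; apply: eq_bigr => i _.
  rewrite fct_sumE; apply: eq_bigr => j _; rewrite !mxE.
  by transitivity (P i j * (f i s * f j s)); rewrite // mulrCA mulrA.
apply: is_derive_eq.
  apply: is_derive_sum => i; apply: is_derive_sum => j.
  by apply: is_deriveZ; apply: is_deriveM; apply: derivableP.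
rewrite !quad_formE -big_split; apply: eq_bigr => i _; rewrite -big_split.
apply: eq_bigr => j _ /=; rewrite !mxE.
transitivity (P i j * (f i t * 'D_1 (f j) t + f j t * 'D_1 (f i) t)) => //.
ring.
Qed.

Lemma lyapunov_quad_form_le r (A : 'M[R]_N) (D : 'M[R]_(r, N)) :
  (forall i t, 'D_1 (f i) t = (A *m \col_l f l t) i 0) ->
  A^T *m P + P *m A + D^T *m D = 0 ->
  forall t, 0 <= t ->
  ((\col_l f l t)^T *m P *m \col_l f l t) 0 0 <= ((\col_l f l 0)^T *m P *m \col_l f l 0) 0 0.
Proof.
move=> f_ode lyap t t_ge0.
have dV_le0 s : ((\col_l f l s)^T *m P *m \col_l 'D_1 (f l) s) 0 0 +
    ((\col_l 'D_1 (f l) s)^T *m P *m \col_l f l s) 0 0 <= 0.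
  have -> : \col_l 'D_1 (f l) s = A *m \col_l f l s.
    by apply/matrixP => i j; rewrite ord1 mxE f_ode.
  move: (\col_l f l s) => z.
  have PAE : P *m A + A^T *m P = - (D^T *m D).
    by apply/eqP; rewrite -addr_eq0 [P *m A + _]addrC lyap.
  rewrite -!trace_mx11 -linearD /= trmx_mul -!mulmxA -mulmxDr !mulmxA -mulmxDl PAE.
  rewrite mulNmx mulmxN linearN /= oppr_le0 !mulmxA -trmx_mul -mulmxA trace_mx11 mxE.
  by apply: sumr_ge0 => k _; rewrite mxE -expr2 sqr_ge0.
rewrite -subr_le0.
have [c _ ->] := MVT_segment t_ge0 (fun s _ => is_derive_quad_form s)
  (derivable_within_continuous (fun s _ => @ex_derive _ _ _ _ _ _ _ (is_derive_quad_form s))).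
by rewrite subr0 mulr_le0_ge0.
Qed.

End Lyapunov.

Theorem proposition12 (R : realType) (n m r : nat) (lam : 'I_n -> R[i])
    (D : 'M[R]_(r, n * m)) (P : 'M[R]_(n * m))
    (x : 'I_m -> R -> R) (z0 : 'cV[R]_(n * m)) :
  (forall i, complex.Re (lam i) < 0) ->
  (forall k, complex.Im ((lam_poly lam)`_k) = 0) ->
  observable (kron (companion lam) (1%:M : 'M[R]_m)) D ->
  P^T = P -> posdef P ->
  (kron (companion lam) (1%:M : 'M[R]_m))^T *m P
    + P *m kron (companion lam) (1%:M : 'M[R]_m) + D^T *m D = 0 ->
  (forall j k t, (k < n)%N -> derivable (derive1n k (x j)) t 1) ->
  (forall j t, derive1n n (x j) t = - \sum_(k < n) kappa lam k * derive1n k (x j) t) ->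
  (forall (k : 'I_n) j, derive1n k (x j) 0 = z0 (stack_idx k j) 0) ->
  forall t : R, 0 <= t ->
    (\col_j x j t) \in
      ellipsoid 0 (Isel R m n *m invmx P *m (Isel R m n)^T) (Pnorm P z0).
Proof.
move=> _ _ _ sP pP lyap x_derivable ode z0E t t_ge0.
have z0_stacked : z0 = \col_l stacked_derivs x l 0.
  by apply/matrixP => l j; rewrite ord1 mxE /stacked_derivs z0E stack_idx_div_mod.
have stacked_derivable (l : 'I_(n * m)) s : derivable (stacked_derivs x l) s 1.
  exact/x_derivable/ltn_ord.
rewrite (col_Isel_stacked t ode); apply: mem_ellipsoid_quad => //.
- exact: sqrtr_ge0.
- rewrite sqr_sqrtr ?(posdef_psd pP) // z0_stacked.
  exact: (lyapunov_quad_form_le stacked_derivable (stacked_derivs_ode ode) lyap).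
- exact: Isel_range.
Qed.
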